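(* Let $\varphi$ be a skew-morphism of a finite group $A$ with power function $\pi:A\to\mathbb{Z}_m$, where $m$ is the order of $\varphi$, let $n$ be a positive multiple of $m$, and let $\Pi:A\to\mathbb{Z}_n$ be an extended power function of $\varphi$. Then for all nonnegative integers $k,k_1,k_2,q,r$: (a) $\sigma_\Pi(xy,k)\equiv\sigma_\Pi(y,\sigma_\Pi(x,k))\pmod n$ for all $x,y\in A$; (b) $\sigma_\Pi(x,k)\equiv0\pmod n$ for all $x\in A$ if and only if $n\mid k$; (c) $\sigma_\Pi(x,qm+r)\equiv q\,\sigma_\Pi(x,m)+\sigma_\Pi(x,r)\pmod n$ for all $x\in A$; (d) $\sigma_\Pi(x,k_1)\equiv\sigma_\Pi(x,k_2)\pmod n$ for all $x\in A$ if and only if $k_1\equiv k_2\pmod n$.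
   Context: A skew-morphism of a finite group $A$ is a permutation $\varphi$ of $A$ with $\varphi(1_A)=1_A$ for which there is a function $\pi:A\to\mathbb{Z}_m$ ($m$ the order of $\varphi$) with $\varphi(xy)=\varphi(x)\varphi^{\pi(x)}(y)$ for all $x,y\in A$. For a positive multiple $n$ of $m$, $\Pi:A\to\mathbb{Z}_n$ is an extended power function of $\varphi$ if (i) $\Pi(x)\equiv\pi(x)\pmod m$ for all $x$; (ii) $\Pi(1_A)\equiv1\pmod n$; (iii) $\Pi(xy)\equiv\sum_{i=1}^{\Pi(x)}\Pi(\varphi^{i-1}(y))\pmod n$ for all $x,y\in A$. The derived function is $\sigma_\Pi(x,0)=0$, $\sigma_\Pi(x,k)=\sum_{i=1}^{k}\Pi(\varphi^{i-1}(x))\in\mathbb{Z}_n$ for $k>0$; in (a) the inner value is used as second argument via any nonnegative integer representative. *)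

From mathcomp Require Import all_boot all_fingroup.
Unset Printing Implicit Defensive.
Local Open Scope group_scope.

(* A finite group A is the whole finGroupType gT.  The power
   function pi takes values in Z_m, represented by 'I_#[phi]. *)
Definition skew_morphism {gT : finGroupType} (phi : {perm gT})
    (pi : gT -> 'I_#[phi]) : Prop :=
  phi 1 = 1 /\ forall x y : gT, phi (x * y) = phi x * (phi ^+ pi x) y.

(* sigma_Pi(x,k) = sum_{i=1}^k Pi(phi^(i-1)(x)), computed as a natural
   number from the canonical representatives in {0,..,n-1}; it is only
   ever compared modulo n. *)
Definition sigmaPi {gT : finGroupType} (phi : {perm gT}) {n : nat}
    (Pi : gT -> 'I_n) (x : gT) (k : nat) : nat :=
  (\sum_(1 <= i < k.+1) nat_of_ord (Pi ((phi ^+ i.-1) x)))%N.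

Definition ext_power_function {gT : finGroupType} (phi : {perm gT})
    (pi : gT -> 'I_#[phi]) {n : nat} (Pi : gT -> 'I_n) : Prop :=
  [/\ forall x : gT, nat_of_ord (Pi x) = nat_of_ord (pi x) %[mod #[phi]],
      nat_of_ord (Pi 1) = 1 %[mod n]
    & forall x y : gT,
        nat_of_ord (Pi (x * y)) = sigmaPi phi Pi y (Pi x) %[mod n]].

From mathcomp Require Import all_boot all_fingroup cyclic.
Set Implicit Arguments.
Unset Strict Implicit.
Local Open Scope group_scope.

(* Iterating the skew law gives phi^k (x y) = phi^k(x) phi^(sigma(x,k))(y).
   For k = m both phi^m(x y) = x y and phi^m(x) = x, so phi^(sigma(x,m)) = 1,
   i.e. m divides sigma(x,m).  As sigma(x, q m) = q sigma(x,m) and m | n,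
   sigma(x,n) is 0 mod n, hence sigma(x,k) mod n depends only on k mod n.
   Together with axiom (iii) of Pi, the iterated law gives (a) by induction
   on k, and sigma(1,k) = k mod n turns the "for all x" in (b) and (d) into
   a statement about k. *)

Section SigmaPi.

Variables (gT : finGroupType) (phi : {perm gT}) (n : nat) (Pi : gT -> 'I_n).

Notation sigma := (sigmaPi phi Pi).
Notation m := #[phi].

Lemma sigmaPi0 x : sigma x 0 = 0%N.
Proof. by rewrite /sigmaPi big_geq. Qed.

Lemma sigmaPiS x k : sigma x k.+1 = (sigma x k + Pi ((phi ^+ k) x))%N.
Proof. by rewrite /sigmaPi big_nat_recr. Qed.

Lemma permXD a b x : (phi ^+ (a + b)) x = (phi ^+ b) ((phi ^+ a) x).
Proof. by rewrite expgD permM. Qed.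

Lemma permXS k x : (phi ^+ k.+1) x = phi ((phi ^+ k) x).
Proof. by rewrite -addn1 permXD expg1. Qed.

Lemma permX_mul_order q x : (phi ^+ (q * m)) x = x.
Proof. by rewrite mulnC expgM expg_order expg1n perm1. Qed.

Lemma sigmaPiD x a b : sigma x (a + b) = (sigma x a + sigma ((phi ^+ a) x) b)%N.
Proof.
elim: b => [|b IHb]; first by rewrite addn0 sigmaPi0 addn0.
by rewrite addnS !sigmaPiS IHb permXD addnA.
Qed.

Lemma sigmaPi_mul_order x q : sigma x (q * m) = (q * sigma x m)%N.
Proof.
elim: q => [|q IHq]; first by rewrite sigmaPi0.
by rewrite mulSnr sigmaPiD permX_mul_order IHq mulSnr.
Qed.

Variable pi : gT -> 'I_m.
Hypothesis phi1 : phi 1 = 1.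
Hypothesis phiM : forall x y, phi (x * y) = phi x * (phi ^+ pi x) y.
Hypothesis Pi_pi : forall x, Pi x = pi x %[mod m].
Hypothesis Pi1 : Pi 1 = 1 %[mod n].
Hypothesis PiM : forall x y, Pi (x * y) = sigma y (Pi x) %[mod n].
Hypothesis order_dvd_n : (m %| n)%N.

Lemma permX1 k : (phi ^+ k) 1 = 1.
Proof. by elim: k => [|k IHk]; rewrite ?expg0 ?perm1 // permXS IHk phi1. Qed.

Lemma permX_Pi x : phi ^+ Pi x = phi ^+ pi x.
Proof. by rewrite -expg_mod_order Pi_pi modn_small. Qed.

Lemma permXM k x y : (phi ^+ k) (x * y) = (phi ^+ k) x * (phi ^+ sigma x k) y.
Proof.
elim: k => [|k IHk]; first by rewrite sigmaPi0 !expg0 !perm1.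
by rewrite !permXS IHk phiM sigmaPiS permXD permX_Pi.
Qed.

Lemma order_dvdn_sigmaPi x : (m %| sigma x m)%N.
Proof.
rewrite order_dvdn; apply/eqP/permP => y.
by have := permXM m x y; rewrite expg_order !perm1 => /mulgI.
Qed.

Lemma sigmaPi_modn_id x : sigma x n = 0 %[mod n].
Proof.
have -> : sigma x n = sigma x (n %/ m * m) by rewrite divnK.
rewrite sigmaPi_mul_order.
have [c ->] := dvdnP (order_dvdn_sigmaPi x).
by rewrite mulnA mulnAC (divnK order_dvd_n) modnMr mod0n.
Qed.

Lemma sigmaPi_modn x a : sigma x a = sigma x (a %% n) %[mod n].
Proof.
rewrite {1}(divn_eq a n) addnC.
elim: (a %/ n) => [|t IHt]; first by rewrite mul0n addn0.
by rewrite mulSnr addnA sigmaPiD -modnDm IHt sigmaPi_modn_id mod0n addn0 modn_mod.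
Qed.

Lemma eqmod_sigmaPi x a b : a = b %[mod n] -> sigma x a = sigma x b %[mod n].
Proof. by move=> eq_ab; rewrite sigmaPi_modn eq_ab -sigmaPi_modn. Qed.

Lemma sigmaPiM k x y : sigma (x * y) k = sigma y (sigma x k) %[mod n].
Proof.
elim: k => [|k IHk]; first by rewrite !sigmaPi0.
by rewrite sigmaPiS permXM sigmaPiS sigmaPiD -modnDm IHk PiM modnDm.
Qed.

Lemma sigmaPi1 k : sigma 1 k = k %[mod n].
Proof.
elim: k => [|k IHk]; first by rewrite sigmaPi0.
by rewrite sigmaPiS permX1 -modnDm IHk Pi1 modnDm addn1.
Qed.

End SigmaPi.

Theorem proposition3p2 (gT : finGroupType) (phi : {perm gT})
    (pi : gT -> 'I_#[phi]) (Hskew : skew_morphism phi pi)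
    (n : nat) (n_pos : (0 < n)%N) (Hmn : (#[phi] %| n)%N)
    (Pi : gT -> 'I_n) (HPi : ext_power_function phi pi Pi) :
  [/\ (* (a) *)
      (forall (k : nat) (x y : gT) (j : nat),
          j = sigmaPi phi Pi x k %[mod n] ->
          sigmaPi phi Pi (x * y) k = sigmaPi phi Pi y j %[mod n]),
      (* (b) *)
      (forall k : nat,
          (forall x : gT, sigmaPi phi Pi x k = 0 %[mod n]) <-> (n %| k)%N),
      (* (c) *)
      (forall (q r : nat) (x : gT),
          sigmaPi phi Pi x (q * #[phi] + r)%N =
          (q * sigmaPi phi Pi x #[phi] + sigmaPi phi Pi x r)%N %[mod n])
    & (* (d) *)
      (forall k1 k2 : nat,
          (forall x : gT, sigmaPi phi Pi x k1 = sigmaPi phi Pi x k2 %[mod n])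
          <-> k1 = k2 %[mod n])].
Proof.
case: Hskew => phi1 phiM; case: HPi => Pi_pi Pi1 PiM.
have eqmod := eqmod_sigmaPi phiM Pi_pi Hmn.
have sigma1 := sigmaPi1 phi1 Pi1.
split.
- move=> k x y j eq_j.
  by rewrite (sigmaPiM phiM Pi_pi PiM); apply: eqmod; rewrite eq_j.
- move=> k; split=> [sigma_0 | /dvdnP [c ->] x].
  + by rewrite /dvdn -(sigma1 k) sigma_0 mod0n.
  + by rewrite (eqmod x _ 0) ?sigmaPi0 // modnMl mod0n.
- by move=> q r x; rewrite sigmaPiD sigmaPi_mul_order permX_mul_order.
- move=> k1 k2; split=> [sigma_eq | eq_k x]; last exact: eqmod.
  by rewrite -sigma1 sigma_eq sigma1.
Qed.
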